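(* Let $\mathsf k$ be an algebraically closed field of characteristic $p>0$, and let $m<n$, $l_2$, $l_3$ be nonnegative integers. If there exists $\beta\in\mathsf k[x,y]$ with $\beta(0,y)=\beta(x,0)=0$ and $\delta^2(\beta)(z_1,z_2,z_3)=z_1^{p^{l_3}}z_2^{p^{l_2+m}}z_3^{p^{l_2+n}}$, then $p\neq2$ and $l_3-l_2\in\{m,n\}$. Conversely, if $p\ne2$, then such a $\beta$ exists, namely $\beta(x,y)=\frac12x^{2p^{l_3}}y^{p^{l_2+n}}$ if $l_3-l_2=m$, and $\beta(x,y)=x^{p^{l_3}+p^{l_2+m}}y^{p^{l_3}}+\frac12x^{p^{l_2+m}}y^{2p^{l_3}}$ if $l_3-l_2=n$.
   Context: For $\beta\in\mathsf k[x,y]$, $\delta^2(\beta)(z_1,z_2,z_3)=\beta(z_1,z_2)+\beta(z_1+z_2,z_3)-\beta(z_2,z_3)-\beta(z_1,z_2+z_3)$. *)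

From HB Require Import structures.
From mathcomp Require Import all_boot all_order all_algebra all_field.
Set Implicit Arguments. Unset Strict Implicit. Unset Printing Implicit Defensive.
Import GRing.Theory.
Local Open Scope ring_scope.

(* Bivariate polynomials k[x,y] are encoded as {poly {poly k}}:
   the inner variable is x, the outer variable is y.
   Trivariate polynomials k[z1,z2,z3] are {poly {poly {poly k}}}
   with z1 innermost, z3 outermost. *)
Definition poly3 (k : fieldType) := {poly {poly {poly k}}}.

Definition z1 (k : fieldType) : poly3 k := ('X%:P)%:P.
Definition z2 (k : fieldType) : poly3 k := 'X%:P.
Definition z3 (k : fieldType) : poly3 k := 'X.

(* substitution beta(u, v) of elements u v of k[z1,z2,z3] into beta in k[x,y] *)
Definition ev2 (k : fieldType) (beta : {poly {poly k}}) (u v : poly3 k) : poly3 k :=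
  (map_poly (fun c : {poly k} =>
     (map_poly (fun a : k => (a%:P%:P%:P : poly3 k)) c).[u]) beta).[v].

Definition delta2 (k : fieldType) (beta : {poly {poly k}}) : poly3 k :=
  ev2 beta (z1 k) (z2 k) + ev2 beta (z1 k + z2 k) (z3 k)
  - ev2 beta (z2 k) (z3 k) - ev2 beta (z1 k) (z2 k + z3 k).

Definition good_beta (k : fieldType) (p m n l2 l3 : nat) (beta : {poly {poly k}}) : Prop :=
  [/\ map_poly (fun c : {poly k} => c.[0]) beta = 0,
      beta.[0] = 0 &
      delta2 beta = (z1 k) ^+ (p ^ l3) * (z2 k) ^+ (p ^ (l2 + m)) * (z3 k) ^+ (p ^ (l2 + n))].

Definition beta_m (k : fieldType) (p n l2 l3 : nat) : {poly {poly k}} :=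
  ((2%:R : k)^-1 *: 'X^(2 * p ^ l3))%:P * 'X^(p ^ (l2 + n)).

Definition beta_n (k : fieldType) (p m l2 l3 : nat) : {poly {poly k}} :=
  ('X^(p ^ l3 + p ^ (l2 + m)))%:P * 'X^(p ^ l3)
  + ((2%:R : k)^-1 *: 'X^(p ^ (l2 + m)))%:P * 'X^(2 * p ^ l3).

From HB Require Import structures.
From mathcomp Require Import all_boot all_order all_algebra all_field ring.
Import GRing.Theory.
Set Implicit Arguments. Unset Strict Implicit. Unset Printing Implicit Defensive.
Local Open Scope ring_scope.

(* Write B(i, j) for the coefficient of x^i y^j in beta.  For a, b, c > 0 the
   coefficient of z1^a z2^b z3^c in delta^2(beta) is
       B(a + b, c) * C(a + b, b) - B(a, b + c) * C(b + c, c)      (coef3_delta2),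
   because the two other summands of delta^2 miss z3 or z1.  In characteristic p
   the binomial C(p^u + p^v, p^v) is 1 + [u = v] (binomial_ppow_sum), so
   comparing the coefficients at exponents (p^u, p^v, p^t) with those of
   z1^(p^l3) z2^(p^(l2+m)) z3^(p^(l2+n)) yields a linear system in the B's
   (delta2_ppow_coefs).  An elementary elimination on that abstract system
   (section CocycleSystem) shows that l3 must equal l2 + m or l2 + n, and
   that 2 is invertible, i.e. p <> 2.  Conversely, delta^2 is computed on the
   two explicit candidates by viewing substitution as a ring morphism and
   expanding with the Frobenius identity (delta2_beta_m, delta2_beta_n). *)

Lemma sum_ord_indicator (R : pzRingType) n x (F : nat -> R) :
  ((n <= x)%N -> F x = 0) -> \sum_(i < n) (i == x :> nat)%:R * F i = F x.
Proof.
move=> Fx; case: (ltnP x n) => [lt_xn | le_nx].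
  rewrite (bigD1 (Ordinal lt_xn)) //= eqxx mul1r big1 ?addr0 // => i.
  by rewrite -val_eqE /= => /negbTE ->; rewrite mul0r.
rewrite Fx // big1 // => i _; suff /negbTE-> : val i != x by rewrite mul0r.
by apply: contraTneq le_nx => <-; rewrite -ltnNge ltn_ord.
Qed.

(* The term of the binomial expansion of (X + Y)^i contributing X^a Y^b. *)
Lemma binomial_shift i a b :
  ('C(i, b) * (i - b == a) = (i == a + b) * 'C(a + b, b))%N.
Proof.
have [-> | ne_i] := eqVneq i (a + b)%N; first by rewrite addnK eqxx muln1 mul1n.
rewrite mul0n; have [lt_ib | le_bi] := ltnP i b; first by rewrite bin_small.
suff /negbTE-> : (i - b != a)%N by rewrite muln0.
by apply: contraNneq ne_i => <-; rewrite subnK.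
Qed.

Lemma frobenius_ppow (R : comNzRingType) p e (x y : R) : p \in [pchar R] ->
  (x + y) ^+ (p ^ e) = x ^+ (p ^ e) + y ^+ (p ^ e).
Proof.
move=> pcharRp; apply: exprDn_pchar.
by rewrite pnatX (pnatE _ (pcharf_prime pcharRp)) pcharRp.
Qed.

(* A special case of Lucas' theorem: C(p^u + p^v, p^v) = 1 + [p^u = p^v] in
   characteristic p, read off from (X + 1)^(p^u + p^v) = (X^p^u + 1)(X^p^v + 1). *)
Lemma binomial_ppow_sum (R : comNzRingType) p u v : p \in [pchar R] ->
  'C(p ^ u + p ^ v, p ^ v)%:R = 1 + (p ^ u == p ^ v)%N%:R :> R.
Proof.
move=> pcharRp; have p_gt0 := prime_gt0 (pcharf_prime pcharRp).
have pcharPp : p \in [pchar {poly R}] by apply: (rmorph_pchar polyC).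
have ppow_neq0 e : (p ^ e == 0)%N = false by rewrite expn_eq0 gtn_eqF.
have coef_bin : (('X + 1 : {poly R}) ^+ (p ^ u + p ^ v))`_(p ^ v)%N =
                'C(p ^ u + p ^ v, p ^ v)%:R.
  rewrite exprD1n coef_sum (eq_bigr (fun i : 'I_ _ =>
    (i == (p ^ v)%N :> nat)%:R * 'C(p ^ u + p ^ v, i)%:R)).
    by apply: (@sum_ord_indicator _ _ _ (fun i => 'C(p ^ u + p ^ v, i)%:R)) => /bin_small->.
  by move=> i _; rewrite coefMn coefXn eq_sym mulr_natr.
rewrite -coef_bin exprD !frobenius_ppow // !expr1n mulrDl !mulrDr !mulr1 !mul1r -exprD.
rewrite !coefD !coefXn coef1 eqxx -[X in (X == _)%N]add0n eqn_add2r eq_sym.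
by rewrite !ppow_neq0 add0r addr0 addrC (eq_sym (p ^ v)%N).
Qed.

Lemma size_map_poly_leq (R S : nzRingType) (f : R -> S) (q : {poly R}) :
  (size (map_poly f q) <= size q)%N.
Proof. by rewrite map_polyE (leq_trans (size_Poly _)) // size_map. Qed.

(* The linear system satisfied by the coefficients B of a solution, abstracted
   over the exponent map P (later P u = p^u) and the target exponents a, b, c. *)
Section CocycleSystem.
Variables (R : nzRingType) (B : nat -> nat -> R) (P : nat -> nat) (a b c : nat).
Hypothesis coef_eq : forall u v t,
  B (P u + P v) (P t) * (1 + (u == v)%:R) - B (P u) (P v + P t) * (1 + (v == t)%:R) =
  ((a == u) && (b == v) && (c == t))%:R.
Hypothesis neq_bc : b != c.

(* If a, b, c were distinct, the six equations for the permutations of (a, b, c)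
   would telescope to 1 = 0. *)
Lemma cocycle_system_exponents : a = b \/ a = c.
Proof.
have [eq_ab | neq_ab] := eqVneq a b; first by left.
have [eq_ac | neq_ac] := eqVneq a c; first by right.
have e1 := coef_eq a b c; have e2 := coef_eq b a c; have e3 := coef_eq b c a.
have e4 := coef_eq c b a; have e5 := coef_eq c a b; have e6 := coef_eq a c b.
move: e1 e2 e3 e4 e5 e6; rewrite ![b == a]eq_sym ![c == a]eq_sym ![c == b]eq_sym.
rewrite !eqxx !(negbTE neq_ab) !(negbTE neq_ac) !(negbTE neq_bc) /=.
rewrite !addr0 !mulr1 !(addnC (P b) (P a)) !(addnC (P c) (P a)) !(addnC (P c) (P b)).
move=> e1 /subr0_eq e2 /subr0_eq e3 /subr0_eq e4 /subr0_eq e5 /subr0_eq e6.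
by move: e1; rewrite e2 -e3 e4 -e5 e6 subrr => /eqP; rewrite eq_sym oner_eq0.
Qed.

(* If 2 = 0, the factor 1 + [u = v] kills the repeated-exponent terms and
   three equations become contradictory. *)
Lemma cocycle_system_two_neq0 : (2%:R : R) != 0.
Proof.
apply/negP => /eqP two_eq0; have one_one : 1 + 1 = 0 :> R by rewrite -mulr2n.
have [eq_ab | eq_ac] := cocycle_system_exponents; subst a.
- have e1 := coef_eq b b c; have e2 := coef_eq b c b; have e3 := coef_eq c b b.
  move: e1 e2 e3; rewrite !eqxx (negbTE neq_bc) eq_sym (negbTE neq_bc) /= one_one.
  rewrite !mulr0 !addr0 !mulr1 subr0 sub0r (addnC (P c) (P b)).
  move=> e1 /subr0_eq e2 e3; move: e1; rewrite -e2 e3 oppr0 => /eqP.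
  by rewrite eq_sym oner_eq0.
- have e1 := coef_eq c b c; have e2 := coef_eq b c c; have e3 := coef_eq c c b.
  move: e1 e2 e3; rewrite !eqxx (negbTE neq_bc) eq_sym (negbTE neq_bc) /= one_one.
  rewrite !mulr0 !addr0 !mulr1 subr0 sub0r (addnC (P c) (P b)).
  move=> e1 e2 /eqP; rewrite oppr_eq0 => /eqP e3; move: e1.
  by rewrite e2 e3 subrr => /eqP; rewrite eq_sym oner_eq0.
Qed.
End CocycleSystem.

Section SecondCoboundary.
Variable k : fieldType.

Definition C3 : {rmorphism k -> poly3 k} := (polyC \o polyC \o polyC)%FUN.

Definition ev1 (u : poly3 k) : {rmorphism {poly k} -> poly3 k} :=
  (horner_eval u \o map_poly C3)%FUN.

Definition ev2_morph (u v : poly3 k) : {rmorphism {poly {poly k}} -> poly3 k} :=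
  (horner_eval v \o map_poly (ev1 u))%FUN.

Lemma ev2E beta u v : ev2 beta u v = ev2_morph u v beta.
Proof. by []. Qed.

Lemma ev1_monomial (c : k) i u : ev1 u (c *: 'X^i) = C3 c * u ^+ i.
Proof.
by rewrite -mul_polyC rmorphM rmorphXn /= !map_polyC map_polyX !horner_evalE hornerC hornerX.
Qed.

Lemma ev1_Xn i u : ev1 u 'X^i = u ^+ i.
Proof. by rewrite -['X^i]scale1r ev1_monomial rmorph1 mul1r. Qed.

Lemma ev2_monomial (a : {poly k}) j u v : ev2 (a%:P * 'X^j) u v = ev1 u a * v ^+ j.
Proof.
by rewrite ev2E rmorphM rmorphXn /= map_polyC map_polyX !horner_evalE hornerC hornerX.
Qed.

Lemma ev2D (beta1 beta2 : {poly {poly k}}) u v :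
  ev2 (beta1 + beta2) u v = ev2 beta1 u v + ev2 beta2 u v.
Proof. by rewrite !ev2E rmorphD. Qed.

Definition coef3 (P : poly3 k) a b c : k := P`_c`_b`_a.

Lemma coef3_sum I (r : seq I) (F : I -> poly3 k) a b c :
  coef3 (\sum_(i <- r) F i) a b c = \sum_(i <- r) coef3 (F i) a b c.
Proof. by rewrite /coef3 !coef_sum. Qed.

Lemma coef3D P Q a b c : coef3 (P + Q) a b c = coef3 P a b c + coef3 Q a b c.
Proof. by rewrite /coef3 !coefD. Qed.

Lemma coef3B P Q a b c : coef3 (P - Q) a b c = coef3 P a b c - coef3 Q a b c.
Proof. by rewrite /coef3 !coefB. Qed.

Lemma coef3_Mn P n a b c : coef3 (P *+ n) a b c = coef3 P a b c *+ n.
Proof. by rewrite /coef3 !coefMn. Qed.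

Lemma coef3_C3M x P a b c : coef3 (C3 x * P) a b c = x * coef3 P a b c.
Proof. by rewrite /coef3 !coefCM. Qed.

Lemma coef3_monomial i j l a b c :
  coef3 (z1 k ^+ i * z2 k ^+ j * z3 k ^+ l) a b c =
  (i == a)%:R * (j == b)%:R * (l == c)%:R.
Proof.
rewrite /coef3 /z1 /z2 /z3 -!polyC_exp -polyCM coefCM (@coefXn {poly {poly k}}).
rewrite mulr_natr coefMn coefCM (@coefXn {poly k}) mulr_natr !coefMn coefXn.
by rewrite !mulr_natr !(eq_sym a) !(eq_sym b) !(eq_sym c).
Qed.

Lemma coef3_ev2 beta u v a b c x y (K : k) :
  (forall i j, coef3 (u ^+ i * v ^+ j) a b c = (i == x)%:R * (j == y)%:R * K) ->
  coef3 (ev2 beta u v) a b c = beta`_y`_x * K.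
Proof.
move=> coef_uv; rewrite ev2E /= horner_evalE.
rewrite (horner_coef_wide _ (size_map_poly_leq _ _)) coef3_sum.
pose row j := \sum_(i < size beta`_j) (i == x :> nat)%:R * (beta`_j`_i * K).
transitivity (\sum_(j < size beta) (j == y :> nat)%:R * row j).
  apply: eq_bigr => j _; rewrite coef_map /= horner_evalE.
  rewrite (horner_coef_wide _ (size_map_poly_leq _ _)) mulr_suml coef3_sum mulr_sumr.
  apply: eq_bigr => i _; rewrite coef_map -mulrA coef3_C3M coef_uv; ring.
rewrite (@sum_ord_indicator _ _ y row) => [|le_size]; last first.
  by rewrite /row nth_default // big1 // => i _; rewrite coef0 mul0r mulr0.
apply: (@sum_ord_indicator _ _ x (fun i => beta`_y`_i * K)) => le_size.
by rewrite nth_default // mul0r.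
Qed.

Lemma coef3_z1Dz2 i j a b c :
  coef3 ((z1 k + z2 k) ^+ i * z3 k ^+ j) a b c =
  (i == a + b)%N%:R * (j == c)%:R * 'C(a + b, b)%:R.
Proof.
rewrite exprDn mulr_suml coef3_sum.
pose F t := ('C(i, t) * (i - t == a))%N%:R * (j == c)%:R : k.
transitivity (\sum_(t < i.+1) (t == b :> nat)%:R * F t).
  by apply: eq_bigr => t _; rewrite [in LHS]mulrnAl coef3_Mn coef3_monomial /F natrM; ring.
rewrite (@sum_ord_indicator _ _ b F) => [|lt_ib]; last by rewrite /F bin_small // mul0n mul0r.
by rewrite /F binomial_shift natrM; ring.
Qed.

Lemma coef3_z2Dz3 i j a b c :
  coef3 (z1 k ^+ i * (z2 k + z3 k) ^+ j) a b c =
  (i == a)%:R * (j == b + c)%N%:R * 'C(b + c, c)%:R.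
Proof.
rewrite exprDn mulr_sumr coef3_sum.
pose F t := (i == a)%:R * ('C(j, t) * (j - t == b))%N%:R : k.
transitivity (\sum_(t < j.+1) (t == c :> nat)%:R * F t).
  by apply: eq_bigr => t _; rewrite [in LHS]mulrnAr coef3_Mn mulrA coef3_monomial /F natrM; ring.
rewrite (@sum_ord_indicator _ _ c F) => [|lt_jc]; last by rewrite /F bin_small // mul0n mulr0.
by rewrite /F binomial_shift natrM; ring.
Qed.

Lemma coef3_delta2 beta a b c : (0 < a)%N -> (0 < b)%N -> (0 < c)%N ->
  coef3 (delta2 beta) a b c =
  beta`_c`_(a + b) * 'C(a + b, b)%:R - beta`_(b + c)`_a * 'C(b + c, c)%:R.
Proof.
move=> a_gt0 b_gt0 c_gt0.
have a_neq0 : (0 == a)%N = false by rewrite eq_sym gtn_eqF.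
have c_neq0 : (0 == c)%N = false by rewrite eq_sym gtn_eqF.
have coef_z1z2 i j : coef3 (z1 k ^+ i * z2 k ^+ j) a b c = (i == a)%:R * (j == b)%:R * 0.
  by rewrite -[_ * _]mulr1 -(expr0 (z3 k)) coef3_monomial c_neq0 !mulr0.
have coef_z2z3 i j : coef3 (z2 k ^+ i * z3 k ^+ j) a b c = (i == b)%:R * (j == c)%:R * 0.
  by rewrite -[z2 k ^+ i]mul1r -(expr0 (z1 k)) coef3_monomial a_neq0 !mul0r mulr0.
rewrite /delta2 !coef3B coef3D (coef3_ev2 _ coef_z1z2) (coef3_ev2 _ coef_z2z3).
rewrite (coef3_ev2 _ (fun i j => coef3_z1Dz2 i j a b c)).
rewrite (coef3_ev2 _ (fun i j => coef3_z2Dz3 i j a b c)).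
by rewrite !mulr0 add0r subr0.
Qed.

Lemma delta2_ppow_coefs beta p e1 e2 e3 : p \in [pchar k] ->
  delta2 beta = z1 k ^+ (p ^ e1) * z2 k ^+ (p ^ e2) * z3 k ^+ (p ^ e3) ->
  forall u v t,
  beta`_(p ^ t)`_(p ^ u + p ^ v) * (1 + (u == v)%:R)
    - beta`_(p ^ v + p ^ t)`_(p ^ u) * (1 + (v == t)%:R) =
  ((e1 == u) && (e2 == v) && (e3 == t))%:R.
Proof.
move=> pcharp delta2E u v t; have p_gt1 := prime_gt1 (pcharf_prime pcharp).
have := congr1 (fun P => coef3 P (p ^ u) (p ^ v) (p ^ t)) delta2E.
rewrite coef3_monomial coef3_delta2 ?expn_gt0 ?(ltnW p_gt1) //.
by rewrite !binomial_ppow_sum // !eqn_exp2l // -!natrM !mulnb.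
Qed.

Lemma good_beta_necessary p m n l2 l3 (beta : {poly {poly k}}) :
  p \in [pchar k] -> (m < n)%N -> good_beta p m n l2 l3 beta ->
  p <> 2%N /\ (l3 = l2 + m \/ l3 = l2 + n)%N.
Proof.
move=> pcharp lt_mn [_ _ delta2E].
have coef_eq := delta2_ppow_coefs pcharp delta2E.
have neq_mn : (l2 + m != l2 + n)%N by rewrite eqn_add2l ltn_eqF.
split; last exact: (cocycle_system_exponents (B := fun i j => beta`_j`_i) coef_eq neq_mn).
move=> p_eq2; have := cocycle_system_two_neq0 (B := fun i j => beta`_j`_i) coef_eq neq_mn.
by rewrite -p_eq2 (pcharf0 pcharp) eqxx.
Qed.

Lemma two_neq0_of_pchar p : p \in [pchar k] -> p <> 2%N -> (2%:R : k) != 0.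
Proof.
move=> pcharp p_neq2; apply/eqP => two_eq0; apply: p_neq2.
have : 2%N \in [pchar k] by rewrite inE /= two_eq0 eqxx.
by rewrite (pcharf_eq pcharp) inE => /eqP.
Qed.

Lemma C3_half : (2%:R : k) != 0 -> C3 2%:R^-1 * 2%:R = 1.
Proof. by move=> two_neq0; rewrite -(rmorph_nat C3) -rmorphM mulVf ?rmorph1. Qed.

Lemma delta2_beta_m p n l2 l3 : p \in [pchar k] -> (2%:R : k) != 0 ->
  @eq {poly {poly {poly k}}} (delta2 (beta_m k p n l2 l3))
    (z1 k ^+ (p ^ l3) * z2 k ^+ (p ^ l3) * z3 k ^+ (p ^ (l2 + n))).
Proof.
move=> pcharp two_neq0; have pchar3 := rmorph_pchar C3 pcharp.
rewrite /delta2 /beta_m !ev2_monomial !ev1_monomial (mulnC 2%N) !exprM !frobenius_ppow //.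
set a := z1 k ^+ _; set b := z2 k ^+ (p ^ l3); set c := z3 k ^+ _.
have -> : a * b * c = C3 2%:R^-1 * 2%:R * (a * b * c) by rewrite C3_half ?mul1r.
ring.
Qed.

Lemma delta2_beta_n p m l2 l3 : p \in [pchar k] -> (2%:R : k) != 0 ->
  @eq {poly {poly {poly k}}} (delta2 (beta_n k p m l2 l3))
    (z1 k ^+ (p ^ l3) * z2 k ^+ (p ^ (l2 + m)) * z3 k ^+ (p ^ l3)).
Proof.
move=> pcharp two_neq0; have pchar3 := rmorph_pchar C3 pcharp.
rewrite /delta2 /beta_n !ev2D !ev2_monomial !ev1_Xn !ev1_monomial.
rewrite (mulnC 2%N) !exprM !exprD !frobenius_ppow //.
set a := z1 k ^+ (p ^ l3); set A := z1 k ^+ (p ^ (l2 + m)).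
set b := z2 k ^+ (p ^ l3); set B := z2 k ^+ (p ^ (l2 + m)); set c := z3 k ^+ _.
have -> : a * B * c = a * B * c + (1 - C3 2%:R^-1 * 2%:R) * (A * b * c).
  by rewrite C3_half // subrr mul0r addr0.
ring.
Qed.

Definition vanishes_on_axes (beta : {poly {poly k}}) : Prop :=
  map_poly (horner_eval 0) beta = 0 /\ beta.[0] = 0.

Lemma vanishes_on_axesD beta1 beta2 :
  vanishes_on_axes beta1 -> vanishes_on_axes beta2 -> vanishes_on_axes (beta1 + beta2).
Proof.
rewrite /vanishes_on_axes !rmorphD /= hornerD.
by move=> [-> ->] [-> ->]; rewrite !addr0.
Qed.

Lemma vanishes_on_axes_monomial (a : {poly k}) j :
  a.[0] = 0 -> (0 < j)%N -> vanishes_on_axes (a%:P * 'X^j).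
Proof.
move=> a0 j_gt0; rewrite /vanishes_on_axes.
have -> : map_poly (horner_eval 0) (a%:P * 'X^j) = (a.[0])%:P * 'X^j.
  by rewrite rmorphM /= map_polyC map_polyXn.
by rewrite a0 mul0r hornerCM hornerXn expr0n gtn_eqF ?mulr0.
Qed.

Lemma horner0_Xn i : (0 < i)%N -> ('X^i : {poly k}).[0] = 0.
Proof. by move=> i_gt0; rewrite hornerXn expr0n gtn_eqF. Qed.

Lemma beta_m_good p m n l2 l3 : p \in [pchar k] -> p <> 2%N ->
  l3 = (l2 + m)%N -> good_beta p m n l2 l3 (beta_m k p n l2 l3).
Proof.
move=> pcharp p_neq2 l3E; have p_gt0 := prime_gt0 (pcharf_prime pcharp).
have [axis_x axis_y] : vanishes_on_axes (beta_m k p n l2 l3).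
  apply: vanishes_on_axes_monomial;
    by rewrite ?hornerZ ?horner0_Xn ?mulr0 ?muln_gt0 ?expn_gt0 ?p_gt0.
have two_neq0 := two_neq0_of_pchar pcharp p_neq2.
by split => //; rewrite delta2_beta_m // l3E.
Qed.

Lemma beta_n_good p m n l2 l3 : p \in [pchar k] -> p <> 2%N ->
  l3 = (l2 + n)%N -> good_beta p m n l2 l3 (beta_n k p m l2 l3).
Proof.
move=> pcharp p_neq2 l3E; have p_gt0 := prime_gt0 (pcharf_prime pcharp).
have [axis_x axis_y] : vanishes_on_axes (beta_n k p m l2 l3).
  apply: vanishes_on_axesD; apply: vanishes_on_axes_monomial;
    by rewrite ?hornerZ ?horner0_Xn ?mulr0 ?addn_gt0 ?muln_gt0 ?expn_gt0 ?p_gt0.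
have two_neq0 := two_neq0_of_pchar pcharp p_neq2.
by split => //; rewrite delta2_beta_n // l3E.
Qed.
End SecondCoboundary.

Lemma subz_nat_eq (a b c : nat) : a%:Z - b%:Z = c%:Z <-> a = (b + c)%N.
Proof.
split => [/eqP | ->]; last by rewrite PoszD addrAC subrr add0r.
by rewrite subr_eq -PoszD => /eqP [->]; rewrite addnC.
Qed.

Theorem mainTheorem14 (k : closedFieldType) (p : nat) (hp : p \in [pchar k])
  (m n l2 l3 : nat) (hmn : (m < n)%N) :
  ((exists beta : {poly {poly k}}, good_beta p m n l2 l3 beta) ->
     p <> 2%N /\ (l3%:Z - l2%:Z = m%:Z \/ l3%:Z - l2%:Z = n%:Z)) /\
  (p <> 2%N -> l3%:Z - l2%:Z = m%:Z -> good_beta p m n l2 l3 (beta_m k p n l2 l3)) /\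
  (p <> 2%N -> l3%:Z - l2%:Z = n%:Z -> good_beta p m n l2 l3 (beta_n k p m l2 l3)).
Proof.
split; [|split].
- case=> beta /(good_beta_necessary hp hmn) [p_neq2 l3E]; split => //.
  by case: l3E => l3E; [left | right]; apply/subz_nat_eq.
- by move=> p_neq2 /subz_nat_eq; apply: beta_m_good.
- by move=> p_neq2 /subz_nat_eq; apply: beta_n_good.
Qed.
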